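(* Let $f:X\to Y$ be a continuous map between metric spaces, let $q:[a,b]\to X$ be a rectifiable path, and put $p=f\circ q$. Then: (1) there exists $\tau\in[a,b]$ such that $d(p(a),p(b))\le D^+_{q(\tau)}f\cdot\ell(q)$; (2) $\ell(p)\le \sup_{x\in\operatorname{Im} q}D_x^+f\cdot \ell(q)$.
   Context: The length of a path $q:[a,b]\to X$ in a metric space is $\ell(q)=\sup\sum_{i=0}^{n-1}d(q(t_i),q(t_{i+1}))$ over all partitions $a=t_0\le\dots\le t_n=b$; $q$ is rectifiable if $\ell(q)<\infty$. For a continuous map $f:X\to Y$ and a non-isolated point $x\in X$, $D_x^+f=\limsup_{z\to x,\,z\neq x}\frac{d(f(z),f(x))}{d(z,x)}\in[0,\infty]$ and $D_x^-f=\liminf_{z\to x,\,z\neq x}\frac{d(f(z),f(x))}{d(z,x)}\in[0,\infty]$. It is assumed that $X$ has no isolated points, and the convention $0\cdot\infty=0$ is used. *)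

From Stdlib Require Import Reals List Lra.
From Coquelicot Require Import Coquelicot.
Open Scope R_scope.

Definition no_isolated_points (X : Metric_Space) : Prop :=
  forall (x : Base X) (eps : R), 0 < eps ->
    exists z : Base X, z <> x /\ dist X z x < eps.

Definition mcontinuous (X Y : Metric_Space) (f : Base X -> Base Y) : Prop :=
  forall (x : Base X) (eps : R), 0 < eps ->
    exists delta : R, 0 < delta /\
      forall z : Base X, dist X z x < delta -> dist Y (f z) (f x) < eps.

(* A path q : [a,b] -> X (values outside [a,b] are irrelevant). *)
Definition is_path (X : Metric_Space) (q : R -> Base X) (a b : R) : Prop :=
  a <= b /\
  forall t : R, a <= t <= b -> forall eps : R, 0 < eps ->
    exists delta : R, 0 < delta /\
      forall s : R, a <= s <= b -> Rabs (s - t) < delta ->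
        dist X (q s) (q t) < eps.

Definition partition_sum (X : Metric_Space) (q : R -> Base X)
    (n : nat) (t : nat -> R) : R :=
  fold_right Rplus 0 (map (fun i => dist X (q (t i)) (q (t (S i)))) (seq 0 n)).

Definition is_partition (a b : R) (n : nat) (t : nat -> R) : Prop :=
  t 0%nat = a /\ t n = b /\ (forall i : nat, (i < n)%nat -> t i <= t (S i)).

Definition path_length (X : Metric_Space) (q : R -> Base X) (a b : R) : Rbar :=
  Lub_Rbar (fun s => exists (n : nat) (t : nat -> R),
                is_partition a b n t /\ s = partition_sum X q n t).

Definition rectifiable (X : Metric_Space) (q : R -> Base X) (a b : R) : Prop :=
  Rbar_lt (path_length X q a b) p_infty.

(* D^+_x f = limsup_{z -> x, z <> x} d(f z, f x) / d(z, x)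
           = inf_n sup { ratio : 0 < d(z,x) < 1/(n+1) }. *)
Definition Dplus (X Y : Metric_Space) (f : Base X -> Base Y) (x : Base X) : Rbar :=
  Inf_seq (fun n : nat =>
    Lub_Rbar (fun r => exists z : Base X,
      0 < dist X z x < / INR (S n) /\
      r = dist Y (f z) (f x) / dist X z x)).

Definition Rbar_sup (E : Rbar -> Prop) : Rbar :=
  Lub_Rbar (fun r => exists v, E v /\ Rbar_le (Finite r) v).

(* Coquelicot's Rbar_mult satisfies the convention 0 * oo = 0. *)
Lemma Rbar_mult_0_infty : Rbar_mult (Finite 0) p_infty = Finite 0.
Proof. unfold Rbar_mult, Rbar_mult'. destruct (Rle_dec 0 0) as [h|h].
  - destruct (Rle_lt_or_eq_dec 0 0 h) as [h'|h']; [exfalso; lra|reflexivity].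
  - exfalso; lra. Qed.

From Stdlib Require Import Reals List Lra Lia Classical ClassicalDescription.
From Coquelicot Require Import Coquelicot.
Open Scope R_scope.

(* Part (1) is a mean value inequality proved by bisection.  Put
   c = d(p a, p b) / l(q).  If d(p s, p t) >= c * l(q|[s,t]) on an interval, the same holds
   on one of its halves, because l is superadditive and d(p _, p _) subadditive.
   The nested intervals shrink to a point tau, and, for a small one [s,t] containing tau,
   the same splitting at tau shows that q s or q t is a point z close to q tau with
   d(f z, f (q tau)) >= c * d(z, q tau); hence D^+_{q tau} f >= c.  Part (2) follows by
   applying (1) on each interval of a partition and summing, again by superadditivity of l. *)

Lemma partition_sum_S (X : Metric_Space) (q : R -> Base X) (n : nat) (t : nat -> R) :
  partition_sum X q (S n) t = partition_sum X q n t + dist X (q (t n)) (q (t (S n))).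
Proof.
  unfold partition_sum. rewrite seq_S, map_app, fold_right_app. simpl.
  generalize (map (fun i => dist X (q (t i)) (q (t (S i)))) (seq 0 n)).
  intro l; induction l as [|x l IH]; simpl; [ring | rewrite IH; ring].
Qed.

Lemma partition_sum_ext (X : Metric_Space) (q : R -> Base X) (n : nat) (t t' : nat -> R) :
  (forall i, (i <= n)%nat -> t i = t' i) -> partition_sum X q n t = partition_sum X q n t'.
Proof.
  induction n as [|n IH]; intro E; [reflexivity|].
  rewrite !partition_sum_S, IH by (intros; apply E; lia).
  rewrite (E n), (E (S n)) by lia. reflexivity.
Qed.

Lemma is_partition_mono (s t : R) (n : nat) (u : nat -> R) :
  is_partition s t n u -> forall i j, (i <= j <= n)%nat -> u i <= u j.
Proof.
  intros [_ [_ C]] i j [Hij Hjn]. induction Hij as [|j Hij IH]; [lra|].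
  apply Rle_trans with (u j); [apply IH; lia | apply C; lia].
Qed.

Lemma is_partition_bounds (s t : R) (n : nat) (u : nat -> R) :
  is_partition s t n u -> forall i, (i <= n)%nat -> s <= u i <= t.
Proof.
  intros P i Hi. pose proof (is_partition_mono s t n u P 0 i) as H0.
  pose proof (is_partition_mono s t n u P i n) as H1.
  destruct P as [A [B _]]. rewrite A in H0. rewrite B in H1. split; [apply H0 | apply H1]; lia.
Qed.

Definition segment_partition (s t : R) (i : nat) : R :=
  match i with O => s | _ => t end.

Lemma is_partition_segment (s t : R) : s <= t -> is_partition s t 1 (segment_partition s t).
Proof.
  intro H. split; [reflexivity | split; [reflexivity|]].
  intros i Hi. destruct i; [simpl; lra | lia].
Qed.

Lemma partition_sum_segment (X : Metric_Space) (q : R -> Base X) (s t : R) :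
  partition_sum X q 1 (segment_partition s t) = dist X (q s) (q t).
Proof. unfold partition_sum; simpl; ring. Qed.

Definition partition_concat (n1 : nat) (t1 t2 : nat -> R) (i : nat) : R :=
  if Nat.leb i n1 then t1 i else t2 (i - n1)%nat.

Lemma partition_concat_r (n1 : nat) (t1 t2 : nat -> R) (i : nat) :
  t1 n1 = t2 0%nat -> (n1 <= i)%nat -> partition_concat n1 t1 t2 i = t2 (i - n1)%nat.
Proof.
  intros E H. unfold partition_concat. destruct (Nat.leb_spec i n1); [|reflexivity].
  replace i with n1 by lia. rewrite Nat.sub_diag. exact E.
Qed.

Lemma is_partition_concat (s m t : R) (n1 n2 : nat) (t1 t2 : nat -> R) :
  is_partition s m n1 t1 -> is_partition m t n2 t2 ->
  is_partition s t (n1 + n2) (partition_concat n1 t1 t2).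
Proof.
  intros [A1 [B1 C1]] [A2 [B2 C2]].
  assert (E : t1 n1 = t2 0%nat) by congruence.
  split; [|split].
  - exact A1.
  - rewrite partition_concat_r by (auto; lia).
    replace (n1 + n2 - n1)%nat with n2 by lia. exact B2.
  - intros i Hi. destruct (Nat.le_gt_cases n1 i).
    + rewrite !partition_concat_r by (auto; lia).
      replace (S i - n1)%nat with (S (i - n1)) by lia. apply C2; lia.
    + unfold partition_concat.
      destruct (Nat.leb_spec i n1), (Nat.leb_spec (S i) n1); try lia. apply C1; lia.
Qed.

Lemma partition_sum_concat (X : Metric_Space) (q : R -> Base X) (n1 n2 : nat) (t1 t2 : nat -> R) :
  t1 n1 = t2 0%nat ->
  partition_sum X q (n1 + n2) (partition_concat n1 t1 t2) =
  partition_sum X q n1 t1 + partition_sum X q n2 t2.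
Proof.
  intro E. induction n2 as [|n2 IH].
  - change (partition_sum X q 0 t2) with 0. rewrite Nat.add_0_r, Rplus_0_r.
    apply partition_sum_ext. intros i Hi.
    unfold partition_concat. destruct (Nat.leb_spec i n1); [reflexivity | lia].
  - rewrite Nat.add_succ_r, !partition_sum_S, IH, !partition_concat_r by (auto; lia).
    replace (S (n1 + n2) - n1)%nat with (S n2) by lia.
    replace (n1 + n2 - n1)%nat with n2 by lia. ring.
Qed.

Lemma Lub_Rbar_ge (E : R -> Prop) (r : R) : E r -> Rbar_le (Finite r) (Lub_Rbar E).
Proof. intro H. apply (proj1 (Lub_Rbar_correct E)), H. Qed.

Lemma Lub_Rbar_le (E : R -> Prop) (M : R) :
  (forall r, E r -> r <= M) -> Rbar_le (Lub_Rbar E) (Finite M).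
Proof. intro H. apply (proj2 (Lub_Rbar_correct E)). intros r Hr. apply H, Hr. Qed.

Lemma Lub_Rbar_plus_le (A B : R -> Prop) (L ra rb : R) : A ra -> B rb ->
  (forall r1 r2, A r1 -> B r2 -> r1 + r2 <= L) ->
  exists la lb, Lub_Rbar A = Finite la /\ Lub_Rbar B = Finite lb /\ la + lb <= L.
Proof.
  intros Ha Hb H.
  assert (UA : forall r2, B r2 -> Rbar_le (Lub_Rbar A) (Finite (L - r2))).
  { intros r2 H2. apply Lub_Rbar_le. intros r1 H1. specialize (H r1 r2 H1 H2). lra. }
  pose proof (Lub_Rbar_ge A ra Ha) as GA. pose proof (UA rb Hb) as UA0.
  destruct (Lub_Rbar A) as [la| |]; simpl in GA, UA0; try contradiction.
  assert (UB : Rbar_le (Lub_Rbar B) (Finite (L - la))).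
  { apply Lub_Rbar_le. intros r2 H2. specialize (UA r2 H2). simpl in UA. lra. }
  pose proof (Lub_Rbar_ge B rb Hb) as GB.
  destruct (Lub_Rbar B) as [lb| |]; simpl in GB, UB; try contradiction.
  exists la, lb. repeat split. lra.
Qed.

Lemma path_length_ge_dist (X : Metric_Space) (q : R -> Base X) (s t : R) :
  s <= t -> Rbar_le (Finite (dist X (q s) (q t))) (path_length X q s t).
Proof.
  intro H. apply Lub_Rbar_ge. exists 1%nat, (segment_partition s t).
  split; [apply is_partition_segment, H | symmetry; apply partition_sum_segment].
Qed.

Lemma path_length_split (X : Metric_Space) (q : R -> Base X) (s m t L : R) :
  s <= m <= t -> path_length X q s t = Finite L ->
  exists L1 L2, path_length X q s m = Finite L1 /\ path_length X q m t = Finite L2 /\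
    L1 + L2 <= L.
Proof.
  intros [Hsm Hmt] EL.
  apply (Lub_Rbar_plus_le _ _ L (dist X (q s) (q m)) (dist X (q m) (q t))).
  - exists 1%nat, (segment_partition s m).
    split; [apply is_partition_segment, Hsm | symmetry; apply partition_sum_segment].
  - exists 1%nat, (segment_partition m t).
    split; [apply is_partition_segment, Hmt | symmetry; apply partition_sum_segment].
  - intros r1 r2 [n1 [t1 [P1 ->]]] [n2 [t2 [P2 ->]]].
    rewrite <- partition_sum_concat
      by (destruct P1 as [_ [B1 _]], P2 as [A2 _]; congruence).
    assert (G : Rbar_le (Finite (partition_sum X q (n1 + n2) (partition_concat n1 t1 t2)))
                        (path_length X q s t)).
    { apply Lub_Rbar_ge. exists (n1 + n2)%nat, (partition_concat n1 t1 t2).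
      split; [apply is_partition_concat with m; assumption | reflexivity]. }
    rewrite EL in G. exact G.
Qed.

(* [real] sends infinite lengths to 0: only meaningful on subintervals of a rectifiable
   path, where [path_length_sub] applies. *)
Definition arc_length (X : Metric_Space) (q : R -> Base X) (s t : R) : R :=
  real (path_length X q s t).

Section RectifiablePath.

Variables (X : Metric_Space) (q : R -> Base X) (a b : R).
Hypothesis Hrect : rectifiable X q a b.

Lemma path_length_sub (s t : R) : a <= s -> s <= t -> t <= b ->
  path_length X q s t = Finite (arc_length X q s t).
Proof.
  intros Has Hst Htb.
  pose proof (path_length_ge_dist X q a b ltac:(lra)) as G. pose proof Hrect as H.
  unfold rectifiable in H.
  destruct (path_length X q a b) as [L| |] eqn:EL; simpl in G, H; try contradiction.
  destruct (path_length_split X q a s b L) as [_ [Lsb [_ [Esb _]]]]; [lra | exact EL |].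
  destruct (path_length_split X q s t b Lsb) as [Lst [_ [Est _]]]; [lra | exact Esb |].
  unfold arc_length. rewrite Est. reflexivity.
Qed.

Lemma arc_length_ge_dist (s t : R) : a <= s -> s <= t -> t <= b ->
  dist X (q s) (q t) <= arc_length X q s t.
Proof.
  intros Has Hst Htb. pose proof (path_length_ge_dist X q s t Hst) as G.
  rewrite path_length_sub in G by assumption. exact G.
Qed.

Lemma arc_length_nonneg (s t : R) : a <= s -> s <= t -> t <= b -> 0 <= arc_length X q s t.
Proof.
  intros Has Hst Htb. pose proof (dist_pos X (q s) (q t)).
  pose proof (arc_length_ge_dist s t Has Hst Htb). lra.
Qed.

Lemma arc_length_superadditive (s m t : R) : a <= s -> s <= m -> m <= t -> t <= b ->
  arc_length X q s m + arc_length X q m t <= arc_length X q s t.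
Proof.
  intros Has Hsm Hmt Htb.
  destruct (path_length_split X q s m t (arc_length X q s t)) as [L1 [L2 [E1 [E2 H]]]];
    [lra | apply path_length_sub; lra |].
  rewrite path_length_sub in E1, E2 by lra.
  injection E1 as ->. injection E2 as ->. exact H.
Qed.

Lemma arc_length_sub_le (s t : R) : a <= s -> s <= t -> t <= b ->
  arc_length X q s t <= arc_length X q a b.
Proof.
  intros Has Hst Htb.
  pose proof (arc_length_superadditive a s b ltac:(lra) Has ltac:(lra) ltac:(lra)).
  pose proof (arc_length_superadditive s t b Has Hst Htb ltac:(lra)).
  pose proof (arc_length_nonneg a s ltac:(lra) Has ltac:(lra)).
  pose proof (arc_length_nonneg t b ltac:(lra) Htb ltac:(lra)). lra.
Qed.

Lemma path_length_le_of_arc_length_bound (Y : Metric_Space) (p : R -> Base Y) (M : R) :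
  0 <= M ->
  (forall s t, a <= s -> s <= t -> t <= b -> dist Y (p s) (p t) <= M * arc_length X q s t) ->
  Rbar_le (path_length Y p a b) (Finite (M * arc_length X q a b)).
Proof.
  intros HM Hseg. apply Lub_Rbar_le. intros r [n [u [P ->]]].
  pose proof (is_partition_bounds a b n u P) as Bd.
  assert (K : forall k, (k <= n)%nat -> partition_sum Y p k u <= M * arc_length X q a (u k)).
  { induction k as [|k IH]; intro Hk.
    - apply Rmult_le_pos; [exact HM|]. destruct (Bd 0%nat) as [B0 B1]; [lia|].
      apply arc_length_nonneg; lra.
    - rewrite partition_sum_S.
      destruct (Bd k) as [Bk Bk']; [lia|]. destruct (Bd (S k)) as [BSk BSk']; [lia|].
      assert (Mk : u k <= u (S k)) by (apply (is_partition_mono a b n u P); lia).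
      pose proof (Hseg (u k) (u (S k)) Bk Mk BSk').
      pose proof (arc_length_superadditive a (u k) (u (S k)) ltac:(lra) Bk Mk BSk').
      assert (M * (arc_length X q a (u k) + arc_length X q (u k) (u (S k)))
              <= M * arc_length X q a (u (S k))) by (apply Rmult_le_compat_l; assumption).
      specialize (IH ltac:(lia)). lra. }
  pose proof (K n (le_n n)) as Kn. destruct P as [_ [B _]]. rewrite B in Kn. exact Kn.
Qed.

End RectifiablePath.

Lemma half_pow_small (w d : R) : 0 < d -> exists n, w * (/ 2) ^ n < d.
Proof.
  intro Hd. destruct (Rle_lt_dec w 0) as [Hw|Hw].
  - exists 0%nat. simpl. lra.
  - destruct (pow_lt_1_zero (/ 2)) with (y := d / w) as [N HN].
    + rewrite Rabs_pos_eq; lra.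
    + apply Rdiv_lt_0_compat; lra.
    + exists N. specialize (HN N (le_n N)).
      rewrite Rabs_pos_eq in HN by (apply pow_le; lra).
      apply Rmult_lt_compat_l with (r := w) in HN; [|exact Hw].
      replace (w * (d / w)) with d in HN by (field; lra). exact HN.
Qed.

Section Bisection.

Variables (G : R -> R -> Prop) (s0 t0 : R).
Hypothesis Hst0 : s0 <= t0.
Hypothesis HG0 : G s0 t0.
Hypothesis Hhalve : forall s t, s0 <= s -> s <= t -> t <= t0 -> G s t ->
  G s ((s + t) / 2) \/ G ((s + t) / 2) t.

Definition bisection_step (I : R * R) : R * R :=
  let m := (fst I + snd I) / 2 in
  if excluded_middle_informative (G (fst I) m) then (fst I, m) else (m, snd I).

Fixpoint bisection_seq (n : nat) : R * R :=
  match n with O => (s0, t0) | S k => bisection_step (bisection_seq k) end.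

Let lo (n : nat) : R := fst (bisection_seq n).
Let hi (n : nat) : R := snd (bisection_seq n).

Lemma bisection_seq_inv (n : nat) :
  s0 <= lo n /\ lo n <= hi n /\ hi n <= t0 /\ hi n - lo n = (t0 - s0) * (/ 2) ^ n /\
  G (lo n) (hi n).
Proof.
  unfold lo, hi. induction n as [|n IH]; simpl.
  - repeat split; try lra. exact HG0.
  - destruct (bisection_seq n) as [s t]; simpl in IH |- *.
    destruct IH as (H1 & H2 & H3 & H4 & H5). unfold bisection_step; simpl.
    assert (W : (s + t) / 2 - s = (t0 - s0) * (/ 2 * (/ 2) ^ n)
                /\ t - (s + t) / 2 = (t0 - s0) * (/ 2 * (/ 2) ^ n)).
    { rewrite Rmult_comm, Rmult_assoc, (Rmult_comm _ (t0 - s0)), <- H4. split; field. }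
    destruct W as [W1 W2].
    destruct (excluded_middle_informative _) as [Hl|Hl]; simpl.
    + repeat split; try lra; assumption.
    + destruct (Hhalve s t H1 H2 H3 H5) as [|Hr]; [contradiction|].
      repeat split; try lra; assumption.
Qed.

Lemma bisection_seq_nested (n : nat) : lo n <= lo (S n) /\ hi (S n) <= hi n.
Proof.
  pose proof (bisection_seq_inv n) as (_ & H & _). unfold lo, hi in *. simpl.
  destruct (bisection_seq n) as [s t]; simpl in H |- *.
  unfold bisection_step; simpl. destruct (excluded_middle_informative _); simpl; lra.
Qed.

Lemma bisection_lo_le_hi (n m : nat) : lo n <= hi m.
Proof.
  assert (Glo : Un_growing lo) by (intro k; apply bisection_seq_nested).
  assert (Dhi : Un_decreasing hi) by (intro k; apply bisection_seq_nested).
  pose proof (tech9 lo Glo n (Nat.max n m) ltac:(lia)) as Hlo.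
  pose proof (decreasing_prop hi m (Nat.max n m) Dhi ltac:(lia)) as Hhi.
  pose proof (bisection_seq_inv (Nat.max n m)) as (_ & Hk & _). lra.
Qed.

Lemma bisection : exists tau, s0 <= tau <= t0 /\
  forall d, 0 < d -> exists s t, s0 <= s <= tau /\ tau <= t <= t0 /\ t - s < d /\ G s t.
Proof.
  destruct (completeness (fun x => exists n, x = lo n)) as [tau [Hub Hlub]].
  - exists t0. intros x [n ->]. pose proof (bisection_seq_inv n). lra.
  - exists (lo 0%nat), 0%nat. reflexivity.
  - assert (Tlo : forall n, lo n <= tau) by (intro n; apply Hub; exists n; reflexivity).
    assert (Thi : forall n, tau <= hi n).
    { intro m. apply Hlub. intros x [n ->]. apply bisection_lo_le_hi. }
    exists tau. split.
    { pose proof (Tlo 0%nat). pose proof (Thi 0%nat). unfold lo, hi in *. simpl in *. lra. }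
    intros d Hd. destruct (half_pow_small (t0 - s0) d Hd) as [n Hn].
    exists (lo n), (hi n). pose proof (bisection_seq_inv n) as (H1 & H2 & H3 & H4 & H5).
    pose proof (Tlo n). pose proof (Thi n). repeat split; try lra. exact H5.
Qed.

End Bisection.

Lemma Dplus_ge (X Y : Metric_Space) (f : Base X -> Base Y) (x : Base X) (c : R) :
  (forall eps, 0 < eps -> exists z, 0 < dist X z x < eps /\
     c <= dist Y (f z) (f x) / dist X z x) ->
  Rbar_le (Finite c) (Dplus X Y f x).
Proof.
  intro H. replace (Finite c) with (Inf_seq (fun _ : nat => Finite c)).
  - apply Inf_seq_le. intro n.
    destruct (H (/ INR (S n))) as [z [Hz Hc]]; [apply Rinv_0_lt_compat, lt_0_INR; lia|].
    apply Rbar_le_trans with (Finite (dist Y (f z) (f x) / dist X z x)); [exact Hc|].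
    apply Lub_Rbar_ge. exists z. split; [exact Hz | reflexivity].
  - apply is_inf_seq_unique. intros [e He]. simpl. split; [intros; lra | exists 0%nat; lra].
Qed.

Lemma Dplus_nonneg (X Y : Metric_Space) (f : Base X -> Base Y) (x : Base X) :
  no_isolated_points X -> Rbar_le (Finite 0) (Dplus X Y f x).
Proof.
  intro HX. apply Dplus_ge. intros eps Heps.
  destruct (HX x eps Heps) as [z [Hzx Hd]]. exists z.
  assert (Hpos : 0 < dist X z x).
  { destruct (dist_pos X z x) as [Hp|E]; [exact Hp|].
    exfalso. apply Hzx, dist_refl, E. }
  split; [lra|]. apply Rle_div_r; [exact Hpos|].
  rewrite Rmult_0_l. apply Rge_le, dist_pos.
Qed.

Lemma mediant_split (c l l1 l2 d d1 d2 : R) : 0 < c -> 0 < l -> c * l <= d ->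
  l1 + l2 <= l -> d <= d1 + d2 -> 0 <= l1 -> 0 <= l2 ->
  (l1 = 0 -> d1 = 0) -> (l2 = 0 -> d2 = 0) ->
  (0 < l1 /\ c * l1 <= d1) \/ (0 < l2 /\ c * l2 <= d2).
Proof.
  intros Hc Hl Hd Hsl Hsd Hl1 Hl2 Z1 Z2.
  destruct (classic (0 < l1 /\ c * l1 <= d1)) as [|N1]; [left; assumption|].
  destruct (classic (0 < l2 /\ c * l2 <= d2)) as [|N2]; [right; assumption|].
  exfalso.
  assert (B1 : d1 < c * l1 \/ (l1 = 0 /\ d1 = 0)).
  { destruct (Rle_lt_dec l1 0); [right; split; [|apply Z1]; lra | left].
    apply Rnot_le_lt. intro. apply N1. split; assumption. }
  assert (B2 : d2 < c * l2 \/ (l2 = 0 /\ d2 = 0)).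
  { destruct (Rle_lt_dec l2 0); [right; split; [|apply Z2]; lra | left].
    apply Rnot_le_lt. intro. apply N2. split; assumption. }
  assert (c * (l1 + l2) <= c * l) by (apply Rmult_le_compat_l; lra).
  assert (0 < c * l) by (apply Rmult_lt_0_compat; assumption).
  destruct B1 as [B1|[E1 F1]], B2 as [B2|[E2 F2]]; try subst l1; try subst l2; lra.
Qed.

Lemma Rbar_mult_Finite_ge (D : Rbar) (c L : R) : 0 <= c -> 0 < L -> Rbar_le (Finite c) D ->
  Rbar_le (Finite (c * L)) (Rbar_mult D (Finite L)).
Proof.
  intros Hc HL HD. destruct D as [d| |]; simpl in HD; try contradiction.
  - simpl. apply Rmult_le_compat_r; lra.
  - rewrite (is_Rbar_mult_unique _ _ _ (is_Rbar_mult_p_infty_pos (Finite L) HL)). exact I.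
Qed.

Lemma Rbar_mult_Finite_le (D : Rbar) (x M L : R) : 0 <= L -> Rbar_le (Finite 0) D ->
  Rbar_le D (Finite M) -> Rbar_le (Finite x) (Rbar_mult D (Finite L)) -> x <= M * L.
Proof.
  intros HL H0 HM Hx. destruct D as [d| |]; simpl in H0, HM; try contradiction.
  simpl in Hx. apply Rle_trans with (d * L); [exact Hx | apply Rmult_le_compat_r; assumption].
Qed.

Section MeanValueInequality.

Variables (X Y : Metric_Space) (f : Base X -> Base Y).
Hypothesis HX : no_isolated_points X.
Variables (q : R -> Base X) (a b : R).
Hypothesis Hq : is_path X q a b.
Hypothesis Hrect : rectifiable X q a b.

Let len := arc_length X q.
Let dY (s t : R) : R := dist Y (f (q s)) (f (q t)).

Lemma dist_comp_eq0 (s t : R) : dist X (q s) (q t) = 0 -> dY s t = 0.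
Proof. intro E. apply dist_refl in E. unfold dY. rewrite E. apply dist_refl. reflexivity. Qed.

Lemma ratio_at_endpoint (c s tau t : R) : 0 < c -> a <= s -> s <= tau -> tau <= t -> t <= b ->
  0 < len s t -> c * len s t <= dY s t ->
  exists u, (u = s \/ u = t) /\ 0 < dist X (q u) (q tau) /\
    c * dist X (q u) (q tau) <= dist Y (f (q u)) (f (q tau)).
Proof.
  intros Hc Has Hs Ht Htb Hl Hd.
  destruct (mediant_split c (len s t) (dist X (q s) (q tau)) (dist X (q t) (q tau))
              (dY s t) (dY s tau) (dY t tau)) as [[H1 H2]|[H1 H2]];
    try assumption; try apply Rge_le, dist_pos.
  - pose proof (arc_length_ge_dist X q a b Hrect s tau Has Hs ltac:(lra)).
    pose proof (arc_length_ge_dist X q a b Hrect tau t ltac:(lra) Ht Htb).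
    pose proof (arc_length_superadditive X q a b Hrect s tau t Has Hs Ht Htb).
    rewrite (dist_sym X (q t)). unfold len. lra.
  - unfold dY. rewrite (dist_sym Y (f (q t))). apply dist_tri.
  - apply dist_comp_eq0.
  - apply dist_comp_eq0.
  - exists s. auto.
  - exists t. auto.
Qed.

Lemma mean_value_inequality (s0 t0 : R) : a <= s0 -> s0 <= t0 -> t0 <= b ->
  exists tau, s0 <= tau <= t0 /\
    Rbar_le (Finite (dY s0 t0)) (Rbar_mult (Dplus X Y f (q tau)) (path_length X q s0 t0)).
Proof.
  intros Ha Hst Hb. rewrite (path_length_sub X q a b Hrect) by assumption. fold (len s0 t0).
  assert (Hlen : forall s t, s0 <= s -> s <= t -> t <= t0 ->
            dist X (q s) (q t) <= len s t /\ 0 <= len s t).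
  { intros s t H1 H2 H3.
    split; [apply (arc_length_ge_dist X q a b Hrect) | apply (arc_length_nonneg X q a b Hrect)];
      lra. }
  destruct (Rle_lt_dec (len s0 t0) 0) as [HL|HL].
  { exists s0. split; [lra|].
    destruct (Hlen s0 t0) as [H1 H2]; [lra|lra|lra|].
    rewrite dist_comp_eq0 by (pose proof (dist_pos X (q s0) (q t0)); lra).
    replace (len s0 t0) with 0 by lra. rewrite Rbar_mult_0_r. apply Rbar_le_refl. }
  destruct (Rle_lt_dec (dY s0 t0) 0) as [HD|HD].
  { exists s0. split; [lra|]. apply Rbar_le_trans with (Finite (0 * len s0 t0)).
    - simpl. lra.
    - apply Rbar_mult_Finite_ge; [lra | exact HL | apply Dplus_nonneg, HX]. }
  set (c := dY s0 t0 / len s0 t0).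
  assert (Hc : 0 < c) by (apply Rdiv_lt_0_compat; assumption).
  assert (Hcdef : c * len s0 t0 = dY s0 t0) by (unfold c; field; lra).
  clearbody c.
  destruct (bisection (fun s t => 0 < len s t /\ c * len s t <= dY s t) s0 t0)
    as [tau [Htau Hnear]].
  - exact Hst.
  - split; [exact HL | lra].
  - intros s t H1 H2 H3 [Hl Hd]. set (m := (s + t) / 2).
    destruct (Hlen s m) as [Dsm Lsm]; [lra | unfold m; lra | unfold m; lra |].
    destruct (Hlen m t) as [Dmt Lmt]; [unfold m; lra | unfold m; lra | lra |].
    apply (mediant_split c (len s t) _ _ (dY s t)); try assumption.
    + apply (arc_length_superadditive X q a b Hrect); unfold m in *; lra.
    + apply dist_tri.
    + intro E. apply dist_comp_eq0. pose proof (dist_pos X (q s) (q m)). lra.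
    + intro E. apply dist_comp_eq0. pose proof (dist_pos X (q m) (q t)). lra.
  - exists tau. split; [exact Htau|].
    rewrite <- Hcdef.
    apply Rbar_mult_Finite_ge; [lra | exact HL |]. apply Dplus_ge. intros eps Heps.
    destruct Hq as [_ Hcont]. destruct (Hcont tau ltac:(lra) eps Heps) as [del [Hdel Hclose]].
    destruct (Hnear del Hdel) as (s & t & Hs & Ht & Hw & Hl & Hd).
    destruct (ratio_at_endpoint c s tau t) as (u & Hu & Hpos & Hr); try (assumption || lra).
    exists (q u). split; [split|].
    + exact Hpos.
    + apply Hclose; destruct Hu as [-> | ->];
        [lra | lra | rewrite Rabs_left1; lra | rewrite Rabs_pos_eq; lra].
    + apply Rle_div_r; assumption.
Qed.

End MeanValueInequality.

Lemma Rbar_sup_ge (E : Rbar -> Prop) (v : Rbar) : E v -> Rbar_le v (Rbar_sup E).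
Proof.
  intro H. unfold Rbar_sup. destruct v as [r| |].
  - apply Lub_Rbar_ge. exists (Finite r). split; [exact H | apply Rbar_le_refl].
  - assert (All : forall r, Rbar_le (Finite r)
                    (Lub_Rbar (fun r => exists v, E v /\ Rbar_le (Finite r) v))).
    { intro r. apply Lub_Rbar_ge. exists p_infty. split; [exact H | exact I]. }
    destruct (Lub_Rbar _) as [l| |]; [| exact I |].
    + specialize (All (l + 1)). simpl in All. lra.
    + exact (All 0).
  - simpl. trivial.
Qed.

Theorem theorem2 (X Y : Metric_Space) (HX : no_isolated_points X)
  (f : Base X -> Base Y) (Hf : mcontinuous X Y f)
  (q : R -> Base X) (a b : R) (Hq : is_path X q a b)
  (Hrect : rectifiable X q a b) :
  let p := fun t : R => f (q t) in
  (exists tau : R, a <= tau <= b /\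
     Rbar_le (Finite (dist Y (p a) (p b)))
             (Rbar_mult (Dplus X Y f (q tau)) (path_length X q a b))) /\
  Rbar_le (path_length Y p a b)
          (Rbar_mult (Rbar_sup (fun v => exists t : R, a <= t <= b /\ v = Dplus X Y f (q t)))
                     (path_length X q a b)).
Proof.
  intro p. pose proof (proj1 Hq) as Hab.
  pose proof (mean_value_inequality X Y f HX q a b Hq Hrect) as MVI.
  split; [apply MVI; lra |].
  set (S := Rbar_sup _).
  assert (HS : forall t, a <= t <= b -> Rbar_le (Dplus X Y f (q t)) S).
  { intros t Ht. apply Rbar_sup_ge. exists t. split; [exact Ht | reflexivity]. }
  clearbody S.
  rewrite (path_length_sub X q a b Hrect a b) by lra.
  pose proof (arc_length_nonneg X q a b Hrect a b ltac:(lra) Hab ltac:(lra)) as HL0.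
  destruct (Rle_lt_dec (arc_length X q a b) 0) as [HL|HL].
  - apply Rbar_le_trans with (Finite (0 * arc_length X q a b)).
    + apply (path_length_le_of_arc_length_bound X q a b Hrect); [lra|].
      intros s t Hs Hst Ht. apply Req_le. rewrite Rmult_0_l. apply dist_comp_eq0.
      pose proof (arc_length_ge_dist X q a b Hrect s t Hs Hst Ht).
      pose proof (arc_length_sub_le X q a b Hrect s t Hs Hst Ht).
      pose proof (dist_pos X (q s) (q t)). lra.
    + replace (arc_length X q a b) with 0 by lra. rewrite Rbar_mult_0_r. simpl. lra.
  - pose proof (Dplus_nonneg X Y f (q a) HX) as D0.
    pose proof (Rbar_le_trans _ _ _ D0 (HS a ltac:(lra))) as S0.
    destruct S as [Sv| |]; simpl in S0; try contradiction.
    + apply (path_length_le_of_arc_length_bound X q a b Hrect); [exact S0|].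
      intros s t Hs Hst Ht. destruct (MVI s t Hs Hst Ht) as [tau [Htau Hm]].
      rewrite (path_length_sub X q a b Hrect s t Hs Hst Ht) in Hm.
      apply (Rbar_mult_Finite_le (Dplus X Y f (q tau))); try assumption.
      * apply (arc_length_nonneg X q a b Hrect); assumption.
      * apply Dplus_nonneg, HX.
      * apply HS. lra.
    + rewrite (is_Rbar_mult_unique _ _ _ (is_Rbar_mult_p_infty_pos (Finite _) HL)).
      destruct (path_length Y p a b); exact I.
Qed.
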